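(* Let $B$ be the infinite complete binary tree, i.e. the rooted tree starting from a single root vertex in which every vertex has exactly two children. Then $\chi_{td}(B) = 7$.
   Context: For a (possibly infinite) simple graph $G$ and a positive integer $k$, a proper $k$-total difference labeling of $G$ is a function $f: V(G)\to\{1,\dots,k\}$, extended to edges by $f(\{u,v\}) = |f(u)-f(v)|$, such that: (i) adjacent vertices receive different labels; (ii) two distinct edges sharing a vertex receive different labels; (iii) no edge receives the same label as either of its endpoints. $\chi_{td}(G)$ denotes the smallest $k$ for which $G$ has a proper $k$-total difference labeling. *)

From mathcomp Require Import all_boot.
Set Implicit Arguments. Unset Strict Implicit. Unset Printing Implicit Defensive.

Definition absdiff (a b : nat) : nat := maxn a b - minn a b.

Definition proper_td_labeling (V : Type) (adj : V -> V -> Prop) (k : nat)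
  (f : V -> nat) : Prop :=
  (forall v, 1 <= f v <= k) /\
  (forall u v, adj u v -> f u <> f v) /\
  (forall u v w, adj u v -> adj u w -> v <> w ->
     absdiff (f u) (f v) <> absdiff (f u) (f w)) /\
  (forall u v, adj u v ->
     absdiff (f u) (f v) <> f u /\ absdiff (f u) (f v) <> f v).

Definition has_proper_td_labeling (V : Type) (adj : V -> V -> Prop) (k : nat) :=
  exists f : V -> nat, proper_td_labeling adj k f.

Definition chi_td_is (V : Type) (adj : V -> V -> Prop) (n : nat) : Prop :=
  has_proper_td_labeling adj n /\
  (forall k, has_proper_td_labeling adj k -> n <= k).

(* The infinite complete binary tree: vertices are finite bit strings
   (the path from the root [::]); the children of s are true :: s and false :: s. *)
Definition btree_adj (u v : seq bool) : Prop :=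
  (exists b : bool, v = b :: u) \/ (exists b : bool, u = b :: v).

From mathcomp Require Import all_boot.
From mathcomp Require Import zify.

Set Implicit Arguments. Unset Strict Implicit. Unset Printing Implicit Defensive.

(* The conditions of a proper labeling only involve a vertex, its parent and
   its two children, so a labeling of the binary tree is an infinite run of a
   finite automaton whose states are the pairs (label of the parent, label).
   Repeatedly deleting the states that admit no valid pair of children among
   the surviving states computes the states that are extendable to arbitrary
   depth.  With 6 labels nothing survives 7 rounds, so no labeling exists;
   with 7 labels the first round is already a fixed point containing a root
   state, and choosing valid children state by state labels the whole tree. *)

Lemma map_uniq_inj_in (T1 T2 : eqType) (g : T1 -> T2) (s : seq T1) :
  uniq (map g s) -> {in s &, injective g}.
Proof.
elim: s => //= x s IH /andP [gx_notin /IH g_inj] v w.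
have g_notx y : y \in s -> g y <> g x by move=> ys gyx; rewrite -gyx map_f in gx_notin.
rewrite !inE => /predU1P [-> | vs] /predU1P [-> | ws] //.
- by move/esym/(g_notx w ws).
- by move/(g_notx v vs).
- exact: g_inj.
Qed.

Definition edge_ok (u x : nat) : bool :=
  [&& x != u, absdiff u x != u & absdiff u x != x].

Definition vertex_ok (k u : nat) (ns : seq nat) : bool :=
  [&& 0 < u <= k, all (edge_ok u) ns & uniq [seq absdiff u x | x <- ns]].

Lemma proper_td_labeling_widen (V : Type) (adj : V -> V -> Prop) k k' f :
  k <= k' -> proper_td_labeling adj k f -> proper_td_labeling adj k' f.
Proof.
move=> le_kk' [f_range f_ok]; split=> // v.
by have /andP [f_pos f_le] := f_range v; rewrite f_pos (leq_trans f_le).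
Qed.

Section LocallyFiniteGraph.

Variables (V : eqType) (adj : V -> V -> Prop) (nbrs : V -> seq V).
Hypothesis adjE : forall u v, adj u v <-> v \in nbrs u.
Hypothesis nbrs_uniq : forall u, uniq (nbrs u).

Lemma proper_td_labeling_local k f :
  proper_td_labeling adj k f <-> forall u, vertex_ok k (f u) (map f (nbrs u)).
Proof.
rewrite /vertex_ok; split.
- move=> [f_range [adj_neq [edge_inj edge_nlabel]]] u.
  rewrite f_range all_map -map_comp map_inj_in_uniq ?nbrs_uniq ?andbT.
    apply/allP=> v /adjE uv /=; have [ne_u ne_v] := edge_nlabel u v uv.
    by rewrite /edge_ok eq_sym; apply/and3P; split; apply/eqP => //; apply: adj_neq.
  move=> v w /adjE uv /adjE uw /= eq_vw.
  by have [// | /eqP ne_vw] := eqVneq v w; case: (edge_inj _ _ _ uv uw ne_vw).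
- move=> f_ok; have f_edge u v : adj u v -> edge_ok (f u) (f v).
    by move=> /adjE uv; have /and3P [_ /allP /(_ _ (map_f f uv)) ok _] := f_ok u.
  split; last split; last split.
  + by move=> v; have /and3P [] := f_ok v.
  + by move=> u v /f_edge /and3P [/eqP ne _ _] /esym.
  + move=> u v w /adjE uv /adjE uw ne_vw eq_vw; apply: ne_vw.
    have /and3P [_ _] := f_ok u; rewrite -map_comp => /map_uniq_inj_in.
    exact.
  + by move=> u v /f_edge /and3P [_ /eqP ? /eqP ?].
Qed.

End LocallyFiniteGraph.

Definition btree_parent (s : seq bool) : seq (seq bool) :=
  if s is _ :: t then [:: t] else [::].

Definition btree_nbrs (s : seq bool) : seq (seq bool) :=
  [:: true :: s, false :: s & btree_parent s].

Lemma btree_adjE u v : btree_adj u v <-> v \in btree_nbrs u.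
Proof.
rewrite !inE; split.
- by case=> [[[] ->] | [b ->]]; rewrite /= ?inE eqxx ?orbT.
- case/or3P=> [/eqP -> | /eqP -> | ]; first by left; exists true.
    by left; exists false.
  by case: u => // b t; rewrite inE => /eqP ->; right; exists b.
Qed.

Lemma btree_nbrs_uniq u : uniq (btree_nbrs u).
Proof.
case: u => [|b t] //=; rewrite !inE !andbT negb_or eqseq_cons /=.
by apply/andP; split; apply/eqP => /(congr1 size) /=; lia.
Qed.

Lemma proper_td_labeling_btree k f :
  proper_td_labeling btree_adj k f <->
  forall s, vertex_ok k (f s) (map f (btree_nbrs s)).
Proof. exact: proper_td_labeling_local btree_adjE btree_nbrs_uniq k f. Qed.

(* A state is (label of the parent as a list, label of the vertex); the
   parent list is empty exactly at the root. *)
Definition state := (seq nat * nat)%type.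

Definition states (k : nat) : seq state :=
  [seq (p, u) | p <- [::] :: [seq [:: x] | x <- iota 1 k], u <- iota 1 k].

Definition label_pairs (k : nat) : seq (nat * nat) :=
  [seq (c1, c2) | c1 <- iota 1 k, c2 <- iota 1 k].

Definition children_ok (k : nat) (F : seq state) (st : state) (c : nat * nat) :=
  [&& vertex_ok k st.2 [:: c.1, c.2 & st.1],
      ([:: st.2], c.1) \in F & ([:: st.2], c.2) \in F].

Definition prune (k : nat) (F : seq state) : seq state :=
  [seq st <- F | has (children_ok k F st) (label_pairs k)].

Definition label_state (f : seq bool -> nat) (s : seq bool) : state :=
  (map f (btree_parent s), f s).

Lemma label_state_in_prune k f : proper_td_labeling btree_adj k f ->
  forall d s, label_state f s \in iter d (prune k) (states k).
Proof.
move=> f_proper; have f_ok := proj1 (proper_td_labeling_btree k f) f_proper.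
have f_range s : f s \in iota 1 k.
  by case: f_proper => /(_ s) /andP [? ?] _; rewrite mem_iota; lia.
elim=> [|d IH] s /=.
  apply: allpairs_f => //; case: s => [|b t]; rewrite inE //=.
  by rewrite map_f ?orbT.
rewrite mem_filter IH andbT; apply/hasP; exists (f (true :: s), f (false :: s)).
  exact: allpairs_f.
by rewrite /children_ok f_ok (IH (true :: s)) (IH (false :: s)).
Qed.

Lemma btree_no_labeling k d :
  iter d (prune k) (states k) = [::] -> ~ has_proper_td_labeling btree_adj k.
Proof. by move=> prune_nil [f /label_state_in_prune /(_ d [::])]; rewrite prune_nil. Qed.

Section LabelingFromFixpoint.

Variables (k u0 : nat) (F : seq state).
Hypothesis F_fixed : prune k F = F.
Hypothesis root_in_F : ([::], u0) \in F.

Definition pick_children (st : state) : nat * nat :=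
  nth (0, 0) (label_pairs k) (find (children_ok k F st) (label_pairs k)).

Lemma pick_childrenP st : st \in F -> children_ok k F st (pick_children st).
Proof. by rewrite -{1}F_fixed mem_filter => /andP [has_c _]; apply: nth_find. Qed.

Fixpoint tree_state (s : seq bool) : state :=
  if s is b :: t then
    let c := pick_children (tree_state t) in
    ([:: (tree_state t).2], if b then c.1 else c.2)
  else ([::], u0).

Lemma tree_state_in s : tree_state s \in F.
Proof.
elim: s => [|b t IH] //=.
by have /and3P [_ ? ?] := pick_childrenP IH; case: b.
Qed.

Definition tree_labeling (s : seq bool) : nat := (tree_state s).2.

Lemma tree_labeling_proper : proper_td_labeling btree_adj k tree_labeling.
Proof.
apply/proper_td_labeling_btree => s; have /and3P [] := pick_childrenP (tree_state_in s).
by case: s.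
Qed.

End LabelingFromFixpoint.

Theorem mainTheorem6 : chi_td_is btree_adj 7.
Proof.
split.
  exists (tree_labeling 7 1 (prune 7 (states 7))).
  by apply: tree_labeling_proper; vm_compute.
move=> k labeling_k; rewrite leqNgt; apply/negP => lt_k7.
apply: (@btree_no_labeling 6 7); first by vm_compute.
by case: labeling_k => f /(proper_td_labeling_widen (lt_k7 : k <= 6)); exists f.
Qed.
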